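(* Let $\phi_a,\phi_b,\phi_2\colon\mathbb{R}\to[0,\infty)$ be continuous probability density functions such that $\{\phi_a>0\}$, $\{\phi_b>0\}$ and $I_2=\{\phi_2>0\}$ are open intervals and $\inf\{\phi_a>0\}=\inf\{\phi_b>0\}=0$. Let $F_a,F_b,F_2$ be the corresponding cumulative distribution functions and suppose $F_a(t)\ge F_b(t)$ for all $t\in\mathbb{R}$. Put $K_a(x)=F_2^{-1}(F_a(x))$ for $x\in\{\phi_a>0\}$ and $K_b(x)=F_2^{-1}(F_b(x))$ for $x\in\{\phi_b>0\}$, where $F_2^{-1}$ is the inverse of $F_2$ restricted to $I_2$. Let $q\colon\mathbb{R}\to[0,\infty)$ be uniformly continuous and integrable, and define $$V_a=\int x\,\frac{\phi_a(x)}{\phi_2(K_a(x))}\,q(K_a(x))\,dx,\qquad V_b=\int x\,\frac{\phi_b(x)}{\phi_2(K_b(x))}\,q(K_b(x))\,dx,$$ the integrals taken over $\{\phi_a>0\}$ and $\{\phi_b>0\}$ respectively and assumed absolutely convergent. Then $V_a\le V_b$.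
   Context: Interpretation: $\phi_a,\phi_b$ are two candidate densities of a cash flow at horizon $T$ with the first stochastically dominated by the second, $\phi_2$ is the density of the terminal value of a traded benchmark security, $q$ its state price density, and $V_a,V_b$ are the values the valuation rule assigns to the two cash flows. *)

From HB Require Import structures.
From mathcomp Require Import all_boot all_order all_algebra.
From mathcomp Require Import all_classical all_reals all_analysis.
Set Implicit Arguments. Unset Strict Implicit. Unset Printing Implicit Defensive.
Import Order.TTheory GRing.Theory Num.Theory numFieldNormedType.Exports.
Local Open Scope classical_set_scope.
Local Open Scope ring_scope.

Section defs.
Variable R : realType.
Local Notation mu := (@lebesgue_measure R).

Definition is_density (phi : R -> R) : Prop :=
  (forall x, 0 <= phi x) /\
  mu.-integrable setT (fun x => (phi x)%:E) /\
  (\int[mu]_x (phi x)%:E = 1)%E.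

Definition supp (phi : R -> R) : set R := [set x | 0 < phi x].

Definition is_open_interval (S : set R) : Prop :=
  exists a b : \bar R, (a < b)%E /\ S = [set x : R | (a < x%:E)%E /\ (x%:E < b)%E].

Definition dens_cdf (phi : R -> R) (t : R) : R := Rintegral mu `]-oo, t] phi.

(* inverse of F restricted to I (the unique x in I with F x = y, when it exists) *)
Definition restr_inv (F : R -> R) (I : set R) (y : R) : R :=
  xget 0 [set x | I x /\ F x = y].
End defs.

From HB Require Import structures.
From mathcomp Require Import all_boot all_order all_algebra.
From mathcomp Require Import all_classical all_reals all_analysis.
From mathcomp Require Import measurable_realfun lra.
Import Order.TTheory GRing.Theory Num.Theory numFieldNormedType.Exports.
Set Implicit Arguments. Unset Strict Implicit. Unset Printing Implicit Defensive.
Local Open Scope classical_set_scope.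
Local Open Scope ring_scope.

(** Let F, F_2 be the distribution functions and K = F_2^-1 o F the quantile
    transport from {phi > 0} onto I_2.  It is a C^1 increasing bijection with
    K' = phi / (phi_2 o K), so the substitution y = K x turns
    V = \int x K'(x) q(K x) dx into \int_(I_2) F^-1(F_2 y) q(y) dy.  The
    substitution is carried out on the compact segments
    F^-1 [1/(n+3), 1 - 1/(n+3)], which exhaust {phi > 0} and are mapped onto
    the corresponding segments of I_2; since {phi > 0} lies in (0, +oo) the
    integrands are nonnegative and monotone convergence passes to the limit.
    Finally F_b <= F_a forces F_a^-1 <= F_b^-1, and q >= 0 gives V_a <= V_b. *)

Lemma unif_continuous_continuous (R : realType) (f : R -> R) :
  unif_continuous f -> continuous f.
Proof.
move=> /unif_continuousP fu x; apply/cvgrPdist_lt => e e0.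
have [d d0 fd] := fu e e0; near=> y.
apply: (fd (x, y)); near: y; exact: (nbhsx_ballx x d d0).
Unshelve. all: by end_near. Qed.

Lemma near_eq_continuous (R : realType) (f g : R -> R) x :
  {near x, f =1 g} -> {for x, continuous g} -> {for x, continuous f}.
Proof.
move=> fg gx; rewrite /prop_for /continuous_at (nbhs_singleton fg).
by apply: cvg_trans gx; apply: near_eq_cvg; apply: filterS fg => y ->.
Qed.

Section integral_exhaustion.
Context {R : realType}.
Local Notation mu := (@lebesgue_measure R).

Lemma nondecreasing_set_integral_gt (A : (set R)^nat) (f : R -> \bar R)
    (v : \bar R) :
  nondecreasing_seq A -> (forall n, measurable (A n)) ->
  (forall n, measurable_fun (A n) f) -> (forall n x, A n x -> (0 <= f x)%E) ->
  (v < \int[mu]_(x in \bigcup_n A n) f x)%E ->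
  exists n, (v < \int[mu]_(x in A n) f x)%E.
Proof.
move=> ndA mA mf f0 vlt.
have cvA := @ge0_nondecreasing_set_cvg_integral _ _ _ _ _ mu ndA mA mf f0.
have cvsup := ereal_nondecreasing_cvgn
  (ge0_nondecreasing_set_nondecreasing_integral mu ndA mA mf f0).
rewrite (cvg_unique (@ereal_hausdorff R) cvA cvsup) in vlt.
by have [_ [n _ <-]] := ereal_sup_gt vlt; exists n.
Qed.

Lemma bigcup_itvNy_nat : \bigcup_n `]-oo, (n%:R : R)]%classic = [set: R].
Proof.
apply/seteqP; split => // x _; exists (Num.truncn x).+1 => //=.
by rewrite in_itv /= ltW// truncnS_gt.
Qed.

Lemma bigcup_itvNnat_y : \bigcup_n `](- (n%:R : R)), +oo[%classic = [set: R].
Proof.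
apply/seteqP; split => // x _; exists (Num.truncn (- x)).+1 => //=.
by rewrite in_itv /= andbT ltrNl truncnS_gt.
Qed.

End integral_exhaustion.

Section level.
Context {R : realType}.

Definition level (n : nat) : R := (n.+3%:R)^-1.

Lemma level_bounds n : [/\ 0 < level n, level n <= 1 - level n & 1 - level n < 1].
Proof.
have l0 : 0 < level n by rewrite /level invr_gt0 ltr0n.
have lhalf : level n < 2^-1 by rewrite /level ltf_pV2 ?posrE ?ltr0n// ltr_nat.
split => //; lra.
Qed.

Lemma level_nonincreasing : {homo level : m n / (m <= n)%N >-> n <= m}.
Proof. by move=> m n mn; rewrite /level lef_pV2 ?posrE ?ltr0n// ler_nat. Qed.

Lemma ex_level_lt e : 0 < e -> exists n, level n < e.
Proof.
move=> e0; exists (Num.truncn e^-1); rewrite /level invf_plt ?posrE ?ltr0n//.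
apply: (lt_le_trans (truncnS_gt _)).
by rewrite ler_nat -addn3 -addn1 leq_add2l.
Qed.

End level.

Section density.
Context {R : realType} (phi : R -> R).
Hypotheses (phi_cont : continuous phi) (phi_dens : is_density phi).
Local Notation mu := (@lebesgue_measure R).
Local Notation F := (dens_cdf phi).
Local Notation S := (supp phi).

Lemma density_ge0 x : 0 <= phi x. Proof. by case: phi_dens. Qed.

Lemma density_integrable : mu.-integrable setT (EFin \o phi).
Proof. by case: phi_dens => _ []. Qed.

Lemma integral_density : (\int[mu]_x (phi x)%:E = 1)%E.
Proof. by case: phi_dens => _ []. Qed.

Lemma density_integrableS D : measurable D -> mu.-integrable D (EFin \o phi).
Proof. by move=> mD; apply: integrableS density_integrable. Qed.

Lemma notin_supp_density x : ~ S x -> phi x = 0.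
Proof.
by move=> Sx; apply/eqP; rewrite eq_le density_ge0 andbT leNgt; apply/negP.
Qed.

Lemma open_supp : open S.
Proof.
have -> : S = phi @^-1` `]0, +oo[.
  by apply/funext => x; rewrite /supp /preimage /= in_itv /= andbT.
by apply: open_comp; [move=> x _; exact: phi_cont|exact: itv_open_ends_open].
Qed.

Lemma measurable_supp : measurable S.
Proof. exact: open_measurable open_supp. Qed.

Lemma measurable_fun_supp (f : R -> R) :
  (forall x, S x -> {for x, continuous f}) ->
  measurable_fun S (fun x => (f x)%:E).
Proof.
move=> fc; apply/measurable_EFinP.
by apply: open_continuous_measurable_fun open_supp _ => x /set_mem /fc.
Qed.

Lemma EFin_dens_cdf x : (F x)%:E = (\int[mu]_(t in `]-oo, x]) (phi t)%:E)%E.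
Proof.
rewrite /dens_cdf /Rintegral fineK// integrable_fin_num//.
exact: density_integrableS.
Qed.

Lemma is_derive_dens_cdf (x : R) : is_derive x 1 F (phi x).
Proof.
have xx1 : x < x + 1 by rewrite ltrDl ltr01.
have [|dF F'] := @continuous_FTC1 R phi -oo%O x (x + 1) xx1
  (density_integrableS (measurable_itv _)) _ (@phi_cont x); first exact: ltNyr.
by apply: DeriveDef => //; rewrite -derive1E.
Qed.

Lemma continuous_dens_cdf : continuous F.
Proof.
move=> x; apply: differentiable_continuous; apply/derivable1_diffP.
by have [] := is_derive_dens_cdf x.
Qed.

Lemma dens_cdf_nondecreasing : {homo F : x y / x <= y}.
Proof.
move=> x y xy; have [c _ FyFx] := MVT_segment xy
  (fun z _ => is_derive_dens_cdf z) (continuous_subspaceT continuous_dens_cdf).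
by rewrite -subr_ge0 FyFx mulr_ge0 ?density_ge0 ?subr_ge0.
Qed.

Lemma dens_cdf_ge0 x : 0 <= F x.
Proof. by apply: Rintegral_ge0 => y _; exact: density_ge0. Qed.

Lemma dens_cdf_le1 x : F x <= 1.
Proof.
rewrite -lee_fin EFin_dens_cdf -integral_density.
apply: ge0_subset_integral => //; first exact: measurable_int density_integrable.
by move=> y _; rewrite lee_fin density_ge0.
Qed.

Lemma dens_cdf_add_tail t : F t + Rintegral mu `]t, +oo[ phi = 1.
Proof.
have -> : 1 = Rintegral mu setT phi by rewrite /Rintegral integral_density.
rewrite -(itv_setU_setT false t) Rintegral_setU //.
  by rewrite itv_setU_setT; exact: density_integrable.
apply/disj_setPS => x [] /=; rewrite !in_itv /= andbT => xt tx.
by move: (le_lt_trans xt tx); rewrite ltxx.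
Qed.

Lemma dens_cdf_eq0 c : (forall y, y <= c -> phi y = 0) -> F c = 0.
Proof.
move=> phi0; rewrite /dens_cdf (@eq_Rintegral _ _ _ _ _ (fun=> 0)).
  by rewrite Rintegral_cst// mul0r.
by move=> x; rewrite inE /= in_itv /=; exact: phi0.
Qed.

Lemma dens_cdf_eq1 c : (forall y, c <= y -> phi y = 0) -> F c = 1.
Proof.
move=> phi0; have := dens_cdf_add_tail c.
rewrite (@eq_Rintegral _ _ _ _ _ (fun=> 0)) ?Rintegral_cst ?mul0r ?addr0//.
by move=> x; rewrite inE /= in_itv /= andbT => /ltW; exact: phi0.
Qed.

Lemma ex_dens_cdf_gt u : u < 1 -> exists n : nat, u < F n%:R.
Proof.
move=> u1.
have ndA : nondecreasing_seq (fun n : nat => `]-oo, (n%:R : R)]%classic).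
  move=> m n mn; rewrite subsetEset; apply: subset_itvl.
  by rewrite bnd_simp ler_nat.
have [n|n x _||n Fn] := nondecreasing_set_integral_gt (f := EFin \o phi)
    (v := u%:E) ndA (fun n => measurable_itv _).
- exact: measurable_funS measurableT (@subsetT _ _)
    (measurable_int mu density_integrable).
- by rewrite lee_fin density_ge0.
- by rewrite bigcup_itvNy_nat integral_density lte_fin.
by exists n; rewrite -lte_fin EFin_dens_cdf.
Qed.

Lemma ex_dens_cdf_lt u : 0 < u -> exists n : nat, F (- n%:R) < u.
Proof.
move=> u0.
have ndA : nondecreasing_seq (fun n : nat => `](- (n%:R : R)), +oo[%classic).
  move=> m n mn; rewrite subsetEset; apply: subset_itvr.
  by rewrite bnd_simp lerN2 ler_nat.
have [n|n x _||n tail_gt] := nondecreasing_set_integral_gt (f := EFin \o phi)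
    (v := (1 - u)%:E) ndA (fun n => measurable_itv _).
- exact: measurable_funS measurableT (@subsetT _ _)
    (measurable_int mu density_integrable).
- by rewrite lee_fin density_ge0.
- by rewrite bigcup_itvNnat_y integral_density lte_fin gtrBl.
exists n; have := dens_cdf_add_tail (- n%:R).
move: tail_gt; rewrite -[X in (_ < X)%E]fineK ?integrable_fin_num//;
  last exact: density_integrableS.
by rewrite lte_fin -/(Rintegral _ _ _); lra.
Qed.

Hypothesis supp_itv : is_open_interval S.

Lemma supp_convex x y z : S x -> S y -> x <= z -> z <= y -> S z.
Proof.
case: supp_itv => a [b [_ ->]] /= [ax _] [_ yb] xz zy; split.
  by apply: (lt_le_trans ax); rewrite lee_fin.
by apply: (le_lt_trans _ yb); rewrite lee_fin.
Qed.

Lemma supp_nbhs x : S x -> \forall y \near x, S y.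
Proof. by move=> Sx; apply: (open_nbhs_nbhs (conj open_supp Sx)). Qed.

Lemma ex_supp_lt x : S x -> exists2 z, S z & z < x.
Proof.
move=> /supp_nbhs [e /= e0 xe]; exists (x - e / 2).
  apply: xe => /=; rewrite opprB addrC subrK ger0_norm ?divr_ge0 ?ltW//.
  by rewrite ltr_pdivrMr// ltr_pMr// ltr1n.
by rewrite ltrBlDr ltrDl divr_gt0.
Qed.

Lemma ex_supp_gt x : S x -> exists2 z, S z & x < z.
Proof.
move=> /supp_nbhs [e /= e0 xe]; exists (x + e / 2).
  apply: xe => /=; rewrite opprD addrA subrr sub0r normrN.
  rewrite ger0_norm ?divr_ge0 ?ltW//.
  by rewrite ltr_pdivrMr// ltr_pMr// ltr1n.
by rewrite ltrDl divr_gt0.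
Qed.

Lemma dens_cdf_lt x y : S x -> S y -> x < y -> F x < F y.
Proof.
move=> Sx Sy xy; have [c] := MVT xy (fun z _ => is_derive_dens_cdf z)
  (continuous_subspaceT continuous_dens_cdf).
rewrite in_itv /= => /andP[xc cy] FyFx.
have Sc : S c by apply: (supp_convex Sx Sy); exact: ltW.
by rewrite -subr_gt0 FyFx mulr_gt0 ?subr_gt0.
Qed.

Lemma dens_cdf_gt0 x : S x -> 0 < F x.
Proof.
move=> Sx; have [z Sz zx] := ex_supp_lt Sx.
exact: le_lt_trans (dens_cdf_ge0 z) (dens_cdf_lt Sz Sx zx).
Qed.

Lemma dens_cdf_lt1 x : S x -> F x < 1.
Proof.
move=> Sx; have [z Sz xz] := ex_supp_gt Sx.
exact: lt_le_trans (dens_cdf_lt Sx Sz xz) (dens_cdf_le1 z).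
Qed.

Lemma dens_cdf_surj u : 0 < u -> u < 1 -> exists x, S x /\ F x = u.
Proof.
move=> u0 u1; have [n Fn] := ex_dens_cdf_gt u1; have [m Fm] := ex_dens_cdf_lt u0.
have mn : - m%:R <= n%:R :> R.
  by rewrite leNgt; apply/negP => /ltW /dens_cdf_nondecreasing; lra.
have [|c _ Fc] := @IVT R F _ _ u mn (continuous_subspaceT continuous_dens_cdf).
  have := dens_cdf_nondecreasing mn; rewrite ge_min le_max; lra.
exists c; split => //.
(* As 0 < F c < 1, phi cannot vanish on either side of c. *)
have [z Sz zc] : exists2 z, S z & z <= c.
  apply: contrapT => noS; suff : F c = 0 by lra.
  apply: dens_cdf_eq0 => y yc; apply: notin_supp_density => Sy.
  by apply: noS; exists y.
have [w Sw cw] : exists2 w, S w & c <= w.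
  apply: contrapT => noS; suff : F c = 1 by lra.
  apply: dens_cdf_eq1 => y cy; apply: notin_supp_density => Sy.
  by apply: noS; exists y.
exact: supp_convex Sz Sw zc cw.
Qed.

Local Notation Finv := (restr_inv F S).

Lemma dens_cdf_invP u : 0 < u -> u < 1 -> S (Finv u) /\ F (Finv u) = u.
Proof.
move=> u0 u1; have [x Fx] := dens_cdf_surj u0 u1.
exact: (@xgetI _ 0 [set x | S x /\ F x = u] x Fx).
Qed.

Lemma dens_cdf_invK x : S x -> Finv (F x) = x.
Proof.
move=> Sx; have [SFx FFx] := dens_cdf_invP (dens_cdf_gt0 Sx) (dens_cdf_lt1 Sx).
apply/eqP; rewrite eq_le !leNgt; apply/andP; split; apply/negP.
  by move=> /(dens_cdf_lt Sx SFx); rewrite FFx ltxx.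
by move=> /(dens_cdf_lt SFx Sx); rewrite FFx ltxx.
Qed.

Lemma dens_cdf_inv_le u v : 0 < u -> u <= v -> v < 1 -> Finv u <= Finv v.
Proof.
move=> u0 uv v1; have [Su Fu] := dens_cdf_invP u0 (le_lt_trans uv v1).
have [Sv Fv] := dens_cdf_invP (lt_le_trans u0 uv) v1.
by rewrite leNgt; apply/negP => /(dens_cdf_lt Sv Su); rewrite Fu Fv; lra.
Qed.

Lemma dens_cdf_inv_itv_sub u v :
  0 < u -> u <= v -> v < 1 -> `[Finv u, Finv v] `<=` S.
Proof.
move=> u0 uv v1 x; rewrite /= in_itv /= => /andP[ux xv].
have [Su _] := dens_cdf_invP u0 (le_lt_trans uv v1).
have [Sv _] := dens_cdf_invP (lt_le_trans u0 uv) v1.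
exact: supp_convex Su Sv ux xv.
Qed.

Lemma is_derive_dens_cdf_inv (u : R) :
  0 < u -> u < 1 -> is_derive u 1 Finv (phi (Finv u))^-1.
Proof.
move=> u0 u1; have [SFu FFu] := dens_cdf_invP u0 u1.
have := @is_derive_inverse R F Finv (phi (Finv u)) (Finv u).
rewrite FFu; apply.
- near=> y; apply: dens_cdf_invK; near: y; exact: supp_nbhs.
- by apply: filterE => y; exact: continuous_dens_cdf.
- exact: is_derive_dens_cdf.
- by rewrite gt_eqF.
Unshelve. all: by end_near. Qed.

Definition quantile_segment n := `[Finv (level n), Finv (1 - level n)]%classic.

Lemma quantile_segment_sub n : quantile_segment n `<=` S.
Proof. by have [l0 ll l1] := @level_bounds R n; exact: dens_cdf_inv_itv_sub. Qed.

Lemma quantile_segment_nondecreasing : nondecreasing_seq quantile_segment.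
Proof.
move=> m n mn; have [lm0 lm lm1] := @level_bounds R m.
have [ln0 ln ln1] := @level_bounds R n; have lnm := @level_nonincreasing R _ _ mn.
by rewrite subsetEset; apply: subset_itv; rewrite bnd_simp;
  apply: dens_cdf_inv_le => //; lra.
Qed.

Lemma bigcup_quantile_segment : \bigcup_n quantile_segment n = S.
Proof.
apply/seteqP; split=> [x [n _ /quantile_segment_sub]//|x Sx].
have F0 := dens_cdf_gt0 Sx; have F1 := dens_cdf_lt1 Sx.
have [n] : exists n, level n < Num.min (F x) (1 - F x).
  by apply: ex_level_lt; rewrite lt_min F0 subr_gt0 F1.
rewrite lt_min => /andP[lF lF']; have [l0 _ l1] := @level_bounds R n.
exists n => //; rewrite /quantile_segment /= in_itv /=; apply/andP; split.
  by rewrite -[X in _ <= X](dens_cdf_invK Sx); apply: dens_cdf_inv_le => //; lra.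
by rewrite -[X in X <= _](dens_cdf_invK Sx); apply: dens_cdf_inv_le => //; lra.
Qed.

Lemma quantile_segment_cvg_integral (f : R -> R) :
  (forall x, S x -> {for x, continuous f}) -> (forall x, S x -> 0 <= f x) ->
  (\int[mu]_(x in quantile_segment n) (f x)%:E)%E @[n --> \oo] -->
  (\int[mu]_(x in S) (f x)%:E)%E.
Proof.
move=> fc f0; rewrite -[in X in _ --> X]bigcup_quantile_segment.
apply: (@ge0_nondecreasing_set_cvg_integral _ _ _ _
  (fun x : measurableTypeR R => (f x)%:E) mu quantile_segment_nondecreasing).
- by move=> n; exact: measurable_itv.
- move=> n; exact: measurable_funS measurable_supp (@quantile_segment_sub n)
    (measurable_fun_supp fc).
- by move=> n x /quantile_segment_sub Sx; rewrite lee_fin f0.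
Qed.

End density.

(* The paper's K when psi = phi_2: the increasing map carrying the law with
   density phi to the law with density psi. *)
Definition transport {R : realType} (phi psi : R -> R) (x : R) : R :=
  restr_inv (dens_cdf psi) (supp psi) (dens_cdf phi x).

Section transport.
Context {R : realType} (phi psi : R -> R).
Hypotheses (phi_cont : continuous phi) (phi_dens : is_density phi)
  (phi_itv : is_open_interval (supp phi)).
Hypotheses (psi_cont : continuous psi) (psi_dens : is_density psi)
  (psi_itv : is_open_interval (supp psi)).
Local Notation mu := (@lebesgue_measure R).
Local Notation S := (supp phi).
Local Notation S' := (supp psi).
Local Notation T := (transport phi psi).

Lemma transportP x : S x -> S' (T x) /\ dens_cdf psi (T x) = dens_cdf phi x.
Proof.
move=> Sx; apply: dens_cdf_invP => //; [exact: dens_cdf_gt0|exact: dens_cdf_lt1].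
Qed.

Lemma transportK x : S x -> transport psi phi (T x) = x.
Proof. by move=> Sx; rewrite /transport (transportP Sx).2 dens_cdf_invK. Qed.

Lemma transport_dens_cdf_inv u : 0 < u -> u < 1 ->
  T (restr_inv (dens_cdf phi) S u) = restr_inv (dens_cdf psi) S' u.
Proof. by move=> u0 u1; rewrite /transport (dens_cdf_invP _ _ _ u0 u1).2. Qed.

Lemma transport_lt x y : S x -> S y -> x < y -> T x < T y.
Proof.
move=> Sx Sy xy; have := dens_cdf_lt phi_cont phi_dens phi_itv Sx Sy xy.
rewrite -(transportP Sx).2 -(transportP Sy).2.
by apply: contraTT; rewrite -!leNgt; exact: dens_cdf_nondecreasing.
Qed.

Lemma is_derive_transport (x : R) : S x -> is_derive x 1 T (phi x / psi (T x)).
Proof.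
move=> Sx; rewrite mulrC.
apply: (@is_derive1_comp _ (restr_inv (dens_cdf psi) S') (dens_cdf phi)).
  exact: is_derive_dens_cdf_inv (dens_cdf_gt0 _ _ _ Sx) (dens_cdf_lt1 _ _ _ Sx).
exact: is_derive_dens_cdf.
Qed.

Lemma continuous_transport x : S x -> {for x, continuous T}.
Proof.
move=> /is_derive_transport [dT _].
by apply: differentiable_continuous; apply/derivable1_diffP.
Qed.

Lemma continuous_transport_jacobian x :
  S x -> {for x, continuous (fun y => phi y / psi (T y))}.
Proof.
move=> Sx; have [S'Tx _] := transportP Sx.
apply: continuousM; first exact: phi_cont.
apply: continuousV; first by rewrite gt_eqF.
exact: continuous_comp (continuous_transport Sx) (@psi_cont _).
Qed.

Lemma derive1_transport x : S x -> derive1 T x = phi x / psi (T x).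
Proof. by move=> /is_derive_transport; rewrite derive1E => -[]. Qed.

Lemma continuous_derive1_transport x : S x -> {for x, continuous (derive1 T)}.
Proof.
move=> Sx; apply: (@near_eq_continuous _ _ (fun y => phi y / psi (T y))).
  by near=> y; apply: derive1_transport; near: y; exact: supp_nbhs.
exact: continuous_transport_jacobian.
Unshelve. all: by end_near. Qed.

Lemma integral_transport_segment (f : R -> R) n :
  (forall y, S' y -> {for y, continuous f}) ->
  (\int[mu]_(y in quantile_segment psi n) (f y)%:E
   = \int[mu]_(x in quantile_segment phi n) (f (T x) * (phi x / psi (T x)))%:E)%E.
Proof.
move=> fc; have [l0 ll l1] := @level_bounds R n.
set c := restr_inv (dens_cdf phi) S (level n).
set d := restr_inv (dens_cdf phi) S (1 - level n).
have cd : c <= d by exact: dens_cdf_inv_le.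
have cdS : `[c, d] `<=` S by exact: quantile_segment_sub.
have [Sc Sd] : S c /\ S d by split; apply: cdS; rewrite /= in_itv /= lexx cd.
have -> : quantile_segment psi n = `[T c, T d]%classic.
  by rewrite /quantile_segment !transport_dens_cdf_inv//; lra.
rewrite (@integration_by_substitution_increasing R T f c d cd).
- apply: eq_integral => x /set_mem xcd; congr EFin.
  rewrite -[LHS]/(f (T x) * derive1 T x) derive1_transport//; exact: cdS.
- by move=> x y xcd ycd; apply: transport_lt; exact: cdS.
- move=> x /subset_itv_oo_cc /cdS; exact: continuous_derive1_transport.
- apply/cvg_ex; exists (derive1 T c); apply: cvg_at_right_filter.
  exact: continuous_derive1_transport.
- apply/cvg_ex; exists (derive1 T d); apply: cvg_at_left_filter.
  exact: continuous_derive1_transport.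
- split.
  + move=> x /subset_itv_oo_cc /cdS /is_derive_transport [dT _]; exact: dT.
  + by apply: cvg_at_right_filter; exact: continuous_transport.
  + by apply: cvg_at_left_filter; exact: continuous_transport.
- apply: continuous_in_subspaceT => y /set_mem; rewrite /= in_itv /= => /andP[].
  by move=> /(supp_convex psi_itv (transportP Sc).1 (transportP Sd).1) /[apply] /fc.
Qed.

Lemma integral_transport (f : R -> R) :
  (forall y, S' y -> {for y, continuous f}) -> (forall y, S' y -> 0 <= f y) ->
  (\int[mu]_(x in S) (f (T x) * (phi x / psi (T x)))%:E
   = \int[mu]_(y in S') (f y)%:E)%E.
Proof.
move=> fc f0.
have gc x : S x -> {for x, continuous (fun x => f (T x) * (phi x / psi (T x)))}.
  move=> Sx; apply: continuousM; last exact: continuous_transport_jacobian.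
  exact: continuous_comp (continuous_transport Sx) (fc _ (transportP Sx).1).
have g0 x : S x -> 0 <= f (T x) * (phi x / psi (T x)).
  move=> Sx; apply: mulr_ge0; first exact: f0 (transportP Sx).1.
  by apply: divr_ge0; exact: density_ge0.
apply: (cvg_unique (@ereal_hausdorff R)
  (quantile_segment_cvg_integral phi_cont phi_dens phi_itv gc g0)).
apply: cvg_trans (quantile_segment_cvg_integral psi_cont psi_dens psi_itv fc f0).
by apply: near_eq_cvg; apply: filterE => n; rewrite integral_transport_segment.
Qed.

End transport.

Lemma dens_cdf_inv_le_of_le {R : realType} (phi_a phi_b : R -> R) (u : R) :
  continuous phi_a -> is_density phi_a -> is_open_interval (supp phi_a) ->
  continuous phi_b -> is_density phi_b -> is_open_interval (supp phi_b) ->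
  (forall t, dens_cdf phi_b t <= dens_cdf phi_a t) -> 0 < u -> u < 1 ->
  restr_inv (dens_cdf phi_a) (supp phi_a) u
    <= restr_inv (dens_cdf phi_b) (supp phi_b) u.
Proof.
move=> ca da Ia cb db Ib Fba u0 u1.
have [Sa Fa] := dens_cdf_invP ca da Ia u0 u1.
have [_ Fb] := dens_cdf_invP cb db Ib u0 u1.
set xa := restr_inv _ _ u in Sa Fa *; set xb := restr_inv _ _ u in Fb *.
rewrite leNgt; apply/negP => xb_lt_xa.
have [z Sz z_lt_xa] := ex_supp_lt ca Sa.
have w_lt_xa : Num.max z xb < xa by rewrite gt_max z_lt_xa.
have Sw : supp phi_a (Num.max z xb).
  by apply: (supp_convex Ia Sz Sa); [rewrite le_max lexx|exact: ltW].
have Fw_lt := dens_cdf_lt ca da Ia Sw Sa w_lt_xa.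
have Fxb_le : dens_cdf phi_a xb <= dens_cdf phi_a (Num.max z xb).
  by apply: (dens_cdf_nondecreasing ca da); rewrite le_max lexx orbT.
have := le_lt_trans (le_trans (Fba xb) Fxb_le) Fw_lt.
by rewrite Fa Fb ltxx.
Qed.

Lemma integral_quantile_representation {R : realType} (phi psi q : R -> R) :
  continuous phi -> is_density phi -> is_open_interval (supp phi) ->
  continuous psi -> is_density psi -> is_open_interval (supp psi) ->
  (forall x, supp phi x -> 0 <= x) -> (forall y, 0 <= q y) -> continuous q ->
  (\int[@lebesgue_measure R]_(x in supp phi)
      (x * (phi x / psi (transport phi psi x)) * q (transport phi psi x))%:E
   = \int[@lebesgue_measure R]_(y in supp psi) (transport psi phi y * q y)%:E)%E.
Proof.
move=> ca da Ia cp dp Ip supp_ge0 q0 qc.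
rewrite -(integral_transport ca da Ia cp dp Ip
  (f := fun y => transport psi phi y * q y)).
- apply: eq_integral => x /set_mem Sx; congr EFin.
  by rewrite (transportK ca da Ia cp dp Ip Sx) mulrAC.
- by move=> y Sy; apply: continuousM; [exact: continuous_transport|exact: qc].
- move=> y Sy; apply: mulr_ge0 (q0 y); apply: supp_ge0.
  exact: (transportP cp dp Ip ca da Ia Sy).1.
Qed.

Lemma le_integral_transport {R : realType} (phi_a phi_b psi q : R -> R) :
  continuous phi_a -> is_density phi_a -> is_open_interval (supp phi_a) ->
  continuous phi_b -> is_density phi_b -> is_open_interval (supp phi_b) ->
  continuous psi -> is_density psi -> is_open_interval (supp psi) ->
  (forall x, supp phi_a x -> 0 <= x) ->
  (forall t, dens_cdf phi_b t <= dens_cdf phi_a t) ->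
  (forall y, 0 <= q y) -> continuous q ->
  (\int[@lebesgue_measure R]_(y in supp psi) (transport psi phi_a y * q y)%:E
   <= \int[@lebesgue_measure R]_(y in supp psi) (transport psi phi_b y * q y)%:E)%E.
Proof.
move=> ca da Ia cb db Ib cp dp Ip supp_ge0 Fba q0 qc.
apply: ge0_le_integral.
- exact: measurable_supp cp.
- move=> y Sy; rewrite lee_fin mulr_ge0//; apply: supp_ge0.
  exact: (transportP cp dp Ip ca da Ia Sy).1.
- apply: (measurable_fun_supp cp (f := fun y => transport psi phi_a y * q y)).
  move=> y Sy.
  by apply: continuousM; [exact: continuous_transport|exact: qc].
- apply: (measurable_fun_supp cp (f := fun y => transport psi phi_b y * q y)).
  move=> y Sy.
  by apply: continuousM; [exact: continuous_transport|exact: qc].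
- move=> y Sy; rewrite lee_fin ler_wpM2r//.
  apply: dens_cdf_inv_le_of_le => //.
    exact: dens_cdf_gt0 Sy.
  exact: dens_cdf_lt1 Sy.
Qed.

Theorem mainTheorem3 (R : realType) (phi_a phi_b phi_2 q : R -> R) :
  continuous phi_a -> continuous phi_b -> continuous phi_2 ->
  is_density phi_a -> is_density phi_b -> is_density phi_2 ->
  is_open_interval (supp phi_a) -> is_open_interval (supp phi_b) ->
  is_open_interval (supp phi_2) ->
  (exists ba : \bar R, supp phi_a = [set x : R | 0 < x /\ (x%:E < ba)%E]) ->
  (exists bb : \bar R, supp phi_b = [set x : R | 0 < x /\ (x%:E < bb)%E]) ->
  (forall t, dens_cdf phi_b t <= dens_cdf phi_a t) ->
  (forall x, 0 <= q x) -> unif_continuous q ->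
  (@lebesgue_measure R).-integrable setT (fun x => (q x)%:E) ->
  let K_a := fun x => restr_inv (dens_cdf phi_2) (supp phi_2) (dens_cdf phi_a x) in
  let K_b := fun x => restr_inv (dens_cdf phi_2) (supp phi_2) (dens_cdf phi_b x) in
  let g_a := fun x => x * (phi_a x / phi_2 (K_a x)) * q (K_a x) in
  let g_b := fun x => x * (phi_b x / phi_2 (K_b x)) * q (K_b x) in
  (@lebesgue_measure R).-integrable (supp phi_a) (fun x => (g_a x)%:E) ->
  (@lebesgue_measure R).-integrable (supp phi_b) (fun x => (g_b x)%:E) ->
  Rintegral (@lebesgue_measure R) (supp phi_a) g_a
    <= Rintegral (@lebesgue_measure R) (supp phi_b) g_b.
Proof.
move=> ca cb c2 da db d2 Ia Ib I2 [ba Ea] [bb Eb] Fba q0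
  /unif_continuous_continuous qc _ K_a K_b g_a g_b ia ib.
have supp_ge0 phi (b : \bar R) :
    supp phi = [set x | 0 < x /\ (x%:E < b)%E] -> forall x, supp phi x -> 0 <= x.
  by move=> -> x [/ltW].
rewrite /Rintegral; apply: fine_le.
- by apply: integrable_fin_num ia; exact: open_measurable (open_supp ca).
- by apply: integrable_fin_num ib; exact: open_measurable (open_supp cb).
rewrite (integral_quantile_representation ca da Ia c2 d2 I2 (supp_ge0 _ _ Ea))//.
rewrite (integral_quantile_representation cb db Ib c2 d2 I2 (supp_ge0 _ _ Eb))//.
exact: le_integral_transport (supp_ge0 _ _ Ea) Fba q0 qc.
Qed.
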